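(* There is a universal constant $C>0$ such that for all $a,b,U,V\in\mathbb{R}$ with $U>1$, $V>0$ and $|a|,|b|<V$, and for $k=0,1$, $$\int_{-U}^U\big|\mathcal{F}\big[(\cdot)^k\mathbf{1}_{[a,b]}\big](u)\big|du\le C\big(U^{2k-1}V^{k+1}+(1-k)\log U\big).$$
   Context: $\mathcal{F}f(u)=\int e^{iux}f(x)dx$; $(\cdot)^k\mathbf{1}_{[a,b]}$ is the function $x\mapsto x^k\mathbf{1}_{[a,b]}(x)$. *)

From Stdlib Require Import Reals.
From Coquelicot Require Import Coquelicot.
Open Scope R_scope.

Definition cexpi (t : R) : C := (cos t, sin t).

Definition fourier (f : R -> C) (u : R) : C :=
  @RInt_gen C_R_CompleteNormedModule (fun x => (cexpi (u * x) * f x)%C)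
           (Rbar_locally m_infty) (Rbar_locally p_infty).

Definition ind (a b : R) (x : R) : R :=
  if Rle_dec a x then if Rle_dec x b then 1 else 0 else 0.

Definition mon_ind (k : nat) (a b : R) (x : R) : C := RtoC (x ^ k * ind a b x).

From Pilot Require Import Defs.
From Stdlib Require Import Reals ZArith Lra Lia.
From Coquelicot Require Import Coquelicot.
Open Scope R_scope.

(* The Fourier transform of x^k 1_[a,b] is the pair of moments
   (int_a^b cos(ux) x^k dx, int_a^b sin(ux) x^k dx); each is at most
   (b - a) V^k <= 2 V^(k+1) in absolute value, which integrated over [-U, U]
   gives the case k = 1.  For k = 0 the explicit antiderivatives sin(ux)/u and
   -cos(ux)/u also give the decay 4/|u|; together the two bounds give
   8 V / (1 + V |u|), whose integral 16 ln(1 + V U) is at most 32 ln U + 16 V/U.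
   Integrability in u comes from the moments being Lipschitz in u. *)

Lemma Rabs_cos_le_1 x : Rabs (cos x) <= 1.
Proof. apply Rabs_le, COS_bound. Qed.

Lemma Rabs_sin_le_1 x : Rabs (sin x) <= 1.
Proof. apply Rabs_le, SIN_bound. Qed.

Lemma cos_lipschitz s r : Rabs (cos s - cos r) <= Rabs (s - r).
Proof.
  destruct (MVT_abs cos (fun x => - sin x) r s) as [z [-> _]].
  { intros c _; apply derivable_pt_lim_cos. }
  rewrite Rabs_Ropp.
  pose proof (Rabs_sin_le_1 z); pose proof (Rabs_pos (s - r)); nra.
Qed.

Lemma sin_lipschitz s r : Rabs (sin s - sin r) <= Rabs (s - r).
Proof.
  destruct (MVT_abs sin cos r s) as [z [-> _]].
  { intros c _; apply derivable_pt_lim_sin. }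
  pose proof (Rabs_cos_le_1 z); pose proof (Rabs_pos (s - r)); nra.
Qed.

Lemma Rabs_le_between_ends a c x V :
  a <= x <= c -> Rabs a <= V -> Rabs c <= V -> Rabs x <= V.
Proof.
  intros Hx Ha%Rabs_le_between Hc%Rabs_le_between; apply Rabs_le; lra.
Qed.

Lemma lipschitz_continuous (g : R -> R) L x :
  (forall u v, Rabs (g u - g v) <= L * Rabs (u - v)) -> continuous g x.
Proof.
  intros Hg; apply continuity_pt_filterlim; intros eps Heps.
  pose proof (Rabs_pos L) as HL.
  exists (eps / (Rabs L + 1)); split; [apply Rdiv_lt_0_compat; lra |].
  intros y [_ Hy]; simpl in *; unfold R_dist in *.
  assert (L * Rabs (y - x) <= Rabs L * Rabs (y - x))
    by (apply Rmult_le_compat_r; [apply Rabs_pos | apply RRle_abs]).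
  assert (Rabs L * Rabs (y - x) < eps).
  { apply Rle_lt_trans with (Rabs L * (eps / (Rabs L + 1))).
    - apply Rmult_le_compat_l; lra.
    - replace (Rabs L * (eps / (Rabs L + 1))) with (eps - eps / (Rabs L + 1)) by (field; lra).
      assert (0 < eps / (Rabs L + 1)) by (apply Rdiv_lt_0_compat; lra); lra. }
  pose proof (Hg y x); lra.
Qed.

Section Moments.

Variable t : R -> R.
Hypothesis t_bounded : forall s, Rabs (t s) <= 1.
Hypothesis t_lipschitz : forall s r, Rabs (t s - t r) <= Rabs (s - r).

Definition moment (k : nat) (a c u : R) : R := RInt (fun x => t (u * x) * x ^ k) a c.

Lemma continuous_moment_integrand k u x : continuous (fun x => t (u * x) * x ^ k) x.
Proof.
  apply (continuous_mult (K := R_AbsRing)).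
  - apply (continuous_comp (fun x => u * x) t).
    + apply (@ex_derive_continuous R_AbsRing R_NormedModule); auto_derive; auto.
    + apply (lipschitz_continuous _ 1); intros s r; rewrite Rmult_1_l; apply t_lipschitz.
  - apply (@ex_derive_continuous R_AbsRing R_NormedModule); auto_derive; auto.
Qed.

Lemma ex_RInt_moment k a c u : ex_RInt (fun x => t (u * x) * x ^ k) a c.
Proof.
  apply (@ex_RInt_continuous R_CompleteNormedModule); intros x _.
  apply continuous_moment_integrand.
Qed.

Lemma Rabs_moment_le k a c u V : a <= c -> Rabs a <= V -> Rabs c <= V ->
  Rabs (moment k a c u) <= (c - a) * V ^ k.
Proof.
  intros ac Ha Hc; apply abs_RInt_le_const; auto; [apply ex_RInt_moment |].
  intros x Hx; rewrite Rabs_mult, <- RPow_abs.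
  assert (Rabs x ^ k <= V ^ k)
    by (apply pow_incr; split; [apply Rabs_pos | apply (Rabs_le_between_ends a c); auto]).
  pose proof (t_bounded (u * x)); pose proof (Rabs_pos (t (u * x))).
  pose proof (pow_le (Rabs x) k (Rabs_pos x)).
  nra.
Qed.

Lemma moment_lipschitz k a c u v V : a <= c -> Rabs a <= V -> Rabs c <= V ->
  Rabs (moment k a c u - moment k a c v) <= (c - a) * V ^ S k * Rabs (u - v).
Proof.
  intros ac Ha Hc; unfold moment.
  change (RInt _ a c - RInt _ a c) with
    (minus (RInt (fun x => t (u * x) * x ^ k) a c) (RInt (fun x => t (v * x) * x ^ k) a c)).
  rewrite <- (RInt_minus (V := R_CompleteNormedModule)) by apply ex_RInt_moment.
  rewrite Rmult_assoc; apply abs_RInt_le_const; auto.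
  { apply (ex_RInt_minus (V := R_NormedModule)); apply ex_RInt_moment. }
  intros x Hx; unfold minus, plus, opp; simpl.
  replace (t (u * x) * x ^ k + - (t (v * x) * x ^ k))
    with ((t (u * x) - t (v * x)) * x ^ k) by ring.
  pose proof (Rabs_le_between_ends a c x V Hx Ha Hc).
  assert (Rabs x ^ k <= V ^ k) by (apply pow_incr; split; [apply Rabs_pos | auto]).
  pose proof (t_lipschitz (u * x) (v * x)) as Ht.
  rewrite <- Rmult_minus_distr_r, Rabs_mult in Ht.
  rewrite Rabs_mult, <- RPow_abs.
  pose proof (Rabs_pos (t (u * x) - t (v * x))); pose proof (pow_le (Rabs x) k (Rabs_pos x)).
  pose proof (Rabs_pos (u - v)); pose proof (Rabs_pos x).
  assert (Rabs (t (u * x) - t (v * x)) <= Rabs (u - v) * V) by nra.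
  nra.
Qed.

Lemma Rabs_moment0_le (T : R -> R) a c u :
  (forall s, is_derive T s (t s)) -> (forall s, Rabs (T s) <= 1) -> u <> 0 ->
  Rabs (moment 0 a c u) <= 2 / Rabs u.
Proof.
  intros HT T_bounded Hu.
  assert (HTu : forall x, is_derive (fun x => / u * T (u * x)) x (t (u * x) * x ^ 0)).
  { intros x.
    replace (t (u * x) * x ^ 0) with (/ u * (u * t (u * x))) by (simpl; field; auto).
    apply is_derive_scal, (is_derive_comp T (fun x => u * x)); [apply HT |].
    auto_derive; [auto | ring]. }
  unfold moment.
  rewrite (is_RInt_unique _ _ _ _ (is_RInt_derive _ _ a c (fun x _ => HTu x)
    (fun x _ => continuous_moment_integrand 0 u x))).
  assert (0 < Rabs u) by (apply Rabs_pos_lt; auto).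
  unfold minus, plus, opp; simpl.
  replace (/ u * T (u * c) + - (/ u * T (u * a))) with ((T (u * c) - T (u * a)) / u)
    by (field; auto).
  rewrite Rabs_div by auto.
  apply Rmult_le_compat_r; [left; apply Rinv_0_lt_compat; auto |].
  unfold Rminus; eapply Rle_trans; [apply Rabs_triang |]; rewrite Rabs_Ropp.
  pose proof (T_bounded (u * c)); pose proof (T_bounded (u * a)); lra.
Qed.

End Moments.

Lemma Cmod_le_Rabs_sum p q : Cmod (p, q) <= Rabs p + Rabs q.
Proof.
  pose proof (Rabs_pos p); pose proof (Rabs_pos q).
  unfold Cmod; simpl fst; simpl snd.
  rewrite <- (sqrt_pow2 (Rabs p + Rabs q)) by lra.
  apply sqrt_le_1_alt.
  rewrite <- (pow2_abs p), <- (pow2_abs q); nra.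
Qed.

Lemma Cmod_lipschitz p q p' q' :
  Rabs (Cmod (p, q) - Cmod (p', q')) <= Rabs (p - p') + Rabs (q - q').
Proof.
  rewrite !Cmod_norm; eapply Rle_trans; [apply norm_triangle_inv |].
  rewrite <- Cmod_norm; apply Cmod_le_Rabs_sum.
Qed.

Lemma is_RInt_gen_zero {V : NormedModule R_AbsRing} (f : R -> V) Fa Fb
  {FFa : Filter Fa} {FFb : Filter Fb} :
  filter_prod Fa Fb
    (fun ab => forall x, Rmin (fst ab) (snd ab) < x < Rmax (fst ab) (snd ab) -> f x = zero) ->
  is_RInt_gen f Fa Fb zero.
Proof.
  intros Hf; apply (is_RInt_gen_ext (fun _ => zero)).
  - eapply filter_imp; [| exact Hf]; intros ab Hab x Hx; symmetry; auto.
  - intros P HP; unfold filtermapi; apply filter_forall; intros ab.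
    exists (scal (snd ab - fst ab) (zero : V)); split; [apply is_RInt_const |].
    rewrite (@scal_zero_r R_Ring (NormedModule.ModuleSpace R_AbsRing V)).
    now apply locally_singleton.
Qed.

Lemma is_RInt_gen_of_support {V : NormedModule R_AbsRing} (f : R -> V) a c l :
  a <= c -> (forall x, x < a \/ c < x -> f x = zero) -> is_RInt f a c l ->
  is_RInt_gen f (Rbar_locally m_infty) (Rbar_locally p_infty) l.
Proof.
  intros ac Hf Hl.
  rewrite <- (plus_zero_l l), <- (plus_zero_r l) at 1.
  apply is_RInt_gen_Chasles with a.
  - apply is_RInt_gen_zero; try typeclasses eauto.
    apply (Filter_prod _ _ _ (fun x => x < a) (fun y => y = a)); [now exists a | reflexivity |].
    intros x y Hx -> z Hz; simpl in Hz.
    rewrite Rmin_left, Rmax_right in Hz by lra; apply Hf; lra.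
  - apply is_RInt_gen_Chasles with c; [now apply is_RInt_gen_at_point |].
    apply is_RInt_gen_zero; try typeclasses eauto.
    apply (Filter_prod _ _ _ (fun y => y = c) (fun x => c < x)); [reflexivity | now exists c |].
    intros x y -> Hy z Hz; simpl in Hz.
    rewrite Rmin_left, Rmax_right in Hz by lra; apply Hf; lra.
Qed.

(* [Rmax a b] rather than [b]: for [b < a] the indicator vanishes, and so does an
   integral over [a, a]. *)
Lemma fourier_mon_ind k a b u :
  fourier (mon_ind k a b) u = (moment cos k a (Rmax a b) u, moment sin k a (Rmax a b) u).
Proof.
  pose proof (Rmax_l a b) as ac.
  unfold fourier; apply (is_RInt_gen_unique (V := C_R_CompleteNormedModule)).
  apply is_RInt_gen_of_support with a (Rmax a b); auto.
  - intros x Hx; unfold mon_ind, Defs.ind.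
    destruct (Rle_dec a x); [destruct (Rle_dec x b) |];
      try (pose proof (Rmax_r a b); exfalso; lra);
      rewrite Rmult_0_r; apply Cmult_0_r.
  - apply is_RInt_ext with (fun x => (cos (u * x) * x ^ k, sin (u * x) * x ^ k)).
    + intros x Hx; rewrite Rmin_left, Rmax_right in Hx by auto.
      assert (x <= b) by (unfold Rmax in Hx; destruct (Rle_dec a b); lra).
      unfold mon_ind, Defs.ind, cexpi.
      destruct (Rle_dec a x); [destruct (Rle_dec x b) |]; try (exfalso; lra).
      apply injective_projections; simpl; ring.
    + apply (is_RInt_fct_extend_pair (U := R_NormedModule) (V := R_NormedModule)); simpl;
        apply (RInt_correct (V := R_CompleteNormedModule)), ex_RInt_moment;
        auto using cos_lipschitz, sin_lipschitz.
Qed.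

Section FourierTransformBounds.

Variables (a b V : R).
Hypotheses (Ha : Rabs a <= V) (Hb : Rabs b <= V).

Let c := Rmax a b.

Let a_le_c : a <= c.
Proof. apply Rmax_l. Qed.

Let Rabs_c_le : Rabs c <= V.
Proof. unfold c, Rmax; destruct (Rle_dec a b); auto. Qed.

Let c_sub_a_le : c - a <= 2 * V.
Proof.
  pose proof (proj1 (Rabs_le_between _ _) Ha).
  pose proof (proj1 (Rabs_le_between _ _) Rabs_c_le).
  lra.
Qed.

Lemma Cmod_fourier_mon_ind_le k u : Cmod (fourier (mon_ind k a b) u) <= 4 * V ^ S k.
Proof.
  rewrite fourier_mon_ind; eapply Rle_trans; [apply Cmod_le_Rabs_sum |].
  pose proof (Rabs_moment_le cos Rabs_cos_le_1 cos_lipschitz k a c u V a_le_c Ha Rabs_c_le).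
  pose proof (Rabs_moment_le sin Rabs_sin_le_1 sin_lipschitz k a c u V a_le_c Ha Rabs_c_le).
  assert (0 <= V ^ k) by (apply pow_le; pose proof (Rabs_pos a); lra).
  pose proof c_sub_a_le; unfold c in *; simpl; nra.
Qed.

Lemma Cmod_fourier_mon_ind_lipschitz k u v :
  Rabs (Cmod (fourier (mon_ind k a b) u) - Cmod (fourier (mon_ind k a b) v))
    <= 4 * V ^ S (S k) * Rabs (u - v).
Proof.
  rewrite !fourier_mon_ind; eapply Rle_trans; [apply Cmod_lipschitz |].
  pose proof (moment_lipschitz cos cos_lipschitz k a c u v V a_le_c Ha Rabs_c_le).
  pose proof (moment_lipschitz sin sin_lipschitz k a c u v V a_le_c Ha Rabs_c_le).
  assert (0 <= V ^ S k * Rabs (u - v))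
    by (apply Rmult_le_pos; [apply pow_le; pose proof (Rabs_pos a); lra | apply Rabs_pos]).
  pose proof c_sub_a_le; unfold c in *; simpl in *; nra.
Qed.

Lemma ex_RInt_Cmod_fourier_mon_ind k x y :
  ex_RInt (fun u => Cmod (fourier (mon_ind k a b) u)) x y.
Proof.
  apply (@ex_RInt_continuous R_CompleteNormedModule); intros z _.
  apply (lipschitz_continuous _ (4 * V ^ S (S k))), Cmod_fourier_mon_ind_lipschitz.
Qed.

Lemma Cmod_fourier_ind_le_inv u : u <> 0 -> Cmod (fourier (mon_ind 0 a b) u) <= 4 / Rabs u.
Proof.
  intros Hu; rewrite fourier_mon_ind; eapply Rle_trans; [apply Cmod_le_Rabs_sum |].
  assert (Hcos : forall s, is_derive sin s (cos s)) by (intros; auto_derive; [auto | ring]).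
  assert (Hsin : forall s, is_derive (fun s => - cos s) s (sin s))
    by (intros; auto_derive; [auto | ring]).
  assert (Hopp_cos : forall s, Rabs (- cos s) <= 1)
    by (intros; rewrite Rabs_Ropp; apply Rabs_cos_le_1).
  pose proof (Rabs_moment0_le cos cos_lipschitz sin a c u Hcos Rabs_sin_le_1 Hu).
  pose proof (Rabs_moment0_le sin sin_lipschitz (fun s => - cos s) a c u Hsin Hopp_cos Hu).
  unfold c, Rdiv in *; lra.
Qed.

(* Merges the bounds [4 V] and [4 / |u|] into one function with an explicit integral. *)
Lemma Cmod_fourier_ind_le_profile u :
  Cmod (fourier (mon_ind 0 a b) u) <= 8 * (V / (1 + V * Rabs u)).
Proof.
  pose proof (Rabs_pos a); pose proof (Rabs_pos u).
  pose proof (Cmod_fourier_mon_ind_le 0 u) as Hbound; simpl in Hbound.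
  assert (Hdecay : Cmod (fourier (mon_ind 0 a b) u) * Rabs u <= 4).
  { destruct (Req_dec u 0) as [-> | Hu].
    - rewrite Rabs_R0; lra.
    - assert (0 < Rabs u) by (apply Rabs_pos_lt; auto).
      pose proof (Cmod_fourier_ind_le_inv u Hu).
      apply Rle_trans with (4 / Rabs u * Rabs u); [apply Rmult_le_compat_r; lra |].
      right; field; lra. }
  assert (0 < 1 + V * Rabs u) by nra.
  apply Rmult_le_reg_r with (1 + V * Rabs u); [auto |].
  replace (8 * (V / (1 + V * Rabs u)) * (1 + V * Rabs u)) with (8 * V) by (field; lra).
  nra.
Qed.

End FourierTransformBounds.

Lemma is_RInt_reflect {V : NormedModule R_AbsRing} (f : R -> V) a b l :
  is_RInt f (- b) (- a) l -> is_RInt (fun y => f (- y)) a b l.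
Proof.
  intros Hf%is_RInt_comp_opp%is_RInt_swap%is_RInt_opp.
  rewrite opp_opp in Hf.
  apply (is_RInt_ext _ _ _ _ _ (fun y _ => opp_opp (f (- y))) Hf).
Qed.

Lemma RInt_le_symmetric (f h : R -> R) U :
  0 <= U -> ex_RInt f (- U) U -> ex_RInt h 0 U ->
  (forall u, - U <= u <= U -> f u <= h (Rabs u)) ->
  RInt f (- U) U <= 2 * RInt h 0 U.
Proof.
  intros HU Hf Hh Hfh.
  assert (Hl : ex_RInt f (- U) 0)
    by (apply (ex_RInt_Chasles_1 (V := R_CompleteNormedModule) _ _ _ U); [lra | auto]).
  assert (Hr : ex_RInt f 0 U)
    by (apply (ex_RInt_Chasles_2 (V := R_CompleteNormedModule) _ (- U)); [lra | auto]).
  assert (Hreflect : is_RInt (fun y => f (- y)) 0 U (RInt f (- U) 0)).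
  { apply is_RInt_reflect; rewrite Ropp_0.
    apply (RInt_correct (V := R_CompleteNormedModule)), Hl. }
  rewrite <- (RInt_Chasles (V := R_CompleteNormedModule) f (- U) 0 U Hl Hr).
  rewrite <- (is_RInt_unique _ _ _ _ Hreflect).
  change (plus ?x ?y) with (x + y).
  assert (forall g, (forall y, 0 < y < U -> g y <= h y) -> ex_RInt g 0 U ->
            RInt g 0 U <= RInt h 0 U) as Hcompare by (intros g Hg Hex; apply RInt_le; auto).
  assert (RInt (fun y => f (- y)) 0 U <= RInt h 0 U).
  { apply Hcompare; [| eexists; exact Hreflect].
    intros y Hy; rewrite <- (Rabs_right y) at 2 by lra; rewrite <- Rabs_Ropp; apply Hfh; lra. }
  assert (RInt f 0 U <= RInt h 0 U).
  { apply Hcompare; [| auto].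
    intros y Hy; rewrite <- (Rabs_right y) at 2 by lra; apply Hfh; lra. }
  lra.
Qed.

Lemma is_RInt_log_profile V U : 0 <= V -> 0 <= U ->
  is_RInt (fun s => V / (1 + V * s)) 0 U (ln (1 + V * U)).
Proof.
  intros HV HU.
  replace (ln (1 + V * U)) with (minus (ln (1 + V * U)) (ln (1 + V * 0)))
    by (rewrite Rmult_0_r, Rplus_0_r, ln_1; unfold minus, plus, opp; simpl; ring).
  apply (is_RInt_derive (fun s => ln (1 + V * s))); rewrite Rmin_left, Rmax_right by lra.
  - intros x Hx; auto_derive; [nra | field; nra].
  - intros x Hx; apply (@ex_derive_continuous R_AbsRing R_NormedModule); auto_derive; nra.
Qed.

Lemma ln_1_plus_mul_le U V : 1 <= U -> 0 <= V -> ln (1 + V * U) <= 2 * ln U + V / U.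
Proof.
  intros HU HV.
  assert (0 <= V / U) by (apply Rdiv_le_0_compat; lra).
  apply Rle_trans with (ln (U * U * (1 + V / U))).
  - apply ln_le; [nra |].
    replace (U * U * (1 + V / U)) with (U * U + V * U) by (field; lra); nra.
  - rewrite !ln_mult by nra.
    pose proof (exp_ineq1_le (V / U)).
    assert (ln (1 + V / U) <= V / U) by (rewrite <- (ln_exp (V / U)) at 2; apply ln_le; lra).
    lra.
Qed.

Lemma RInt_Cmod_fourier_ind_le a b U V : 1 <= U -> 0 <= V -> Rabs a <= V -> Rabs b <= V ->
  RInt (fun u => Cmod (fourier (mon_ind 0 a b) u)) (- U) U <= 32 * (V / U + ln U).
Proof.
  intros HU HV Ha Hb.
  assert (Hprofile : is_RInt (fun s => 8 * (V / (1 + V * s))) 0 U (8 * ln (1 + V * U)))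
    by (apply (is_RInt_scal (fun s => V / (1 + V * s))), is_RInt_log_profile; lra).
  eapply Rle_trans.
  { apply (RInt_le_symmetric _ (fun s => 8 * (V / (1 + V * s))) U).
    - lra.
    - apply ex_RInt_Cmod_fourier_mon_ind with V; auto.
    - eexists; exact Hprofile.
    - intros u _; apply Cmod_fourier_ind_le_profile; auto. }
  rewrite (is_RInt_unique (V := R_CompleteNormedModule) _ _ _ _ Hprofile).
  pose proof (ln_1_plus_mul_le U V HU HV).
  assert (0 <= ln U) by (rewrite <- ln_1; apply ln_le; lra).
  assert (0 <= V / U) by (apply Rdiv_le_0_compat; lra).
  lra.
Qed.

Lemma RInt_Cmod_fourier_mon_ind_le k a b U V : 0 <= U -> Rabs a <= V -> Rabs b <= V ->
  RInt (fun u => Cmod (fourier (mon_ind k a b) u)) (- U) U <= 8 * (U * V ^ S k).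
Proof.
  intros HU Ha Hb.
  apply Rle_trans with (RInt (fun _ => 4 * V ^ S k) (- U) U).
  - apply RInt_le; [lra | apply ex_RInt_Cmod_fourier_mon_ind with V; auto | apply ex_RInt_const |].
    intros u _; apply Cmod_fourier_mon_ind_le; auto.
  - rewrite RInt_const; unfold scal; simpl; unfold mult; simpl; lra.
Qed.

Theorem lemma3p6 :
  exists Cst : R, 0 < Cst /\
    forall (a b U V : R) (k : nat),
      1 < U -> 0 < V -> Rabs a < V -> Rabs b < V -> (k <= 1)%nat ->
      RInt (fun u => Cmod (fourier (mon_ind k a b) u)) (- U) U
        <= Cst * (powerRZ U (2 * Z.of_nat k - 1) * V ^ (k + 1)
                  + (1 - INR k) * ln U).
Proof.
  exists 32; split; [lra |].
  intros a b U V k HU HV Ha Hb Hk.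
  destruct k as [| [| k]]; [| | lia].
  - replace (powerRZ U (2 * Z.of_nat 0 - 1) * V ^ (0 + 1) + (1 - INR 0) * ln U)
      with (V / U + ln U) by (simpl; field; lra).
    apply RInt_Cmod_fourier_ind_le; lra.
  - replace (powerRZ U (2 * Z.of_nat 1 - 1) * V ^ (1 + 1) + (1 - INR 1) * ln U)
      with (U * V ^ 2) by (simpl; ring).
    pose proof (RInt_Cmod_fourier_mon_ind_le 1 a b U V ltac:(lra) ltac:(lra) ltac:(lra)).
    assert (0 <= U * V ^ 2) by (apply Rmult_le_pos; [lra | apply pow_le; lra]).
    lra.
Qed.
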